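(* Let $t,t'\in B_n$ with $t\neq t'$ and let $G$ be a digraph such that $\mathbb{A}(G)$ satisfies $t\approx t'$. Let $K$ be a nontrivial strongly connected component of $G$ that is a whirl, and let $u,w$ be vertices in the same block of $K$. If $u\to v_0\to v_1\to\dots\to v_{Z_{t,t'}}$ is a walk in $G$, then $(w,v_0)$ is an edge of $G$. Consequently, $Z_G<Z_{t,t'}$.
   Context: Digraphs $G=(V,E)$ have $E\subseteq V\times V$, loops allowed, possibly infinite. $\mathbb{A}(G)$ is the groupoid on $V\cup\{\infty\}$ with $xy=x$ if $x,y\in V$, $(x,y)\in E$, and $xy=\infty$ otherwise. $B_n$: binary terms with $x_1,\dots,x_n$ each occurring once in this order; $G(t)$: rooted tree defined by $G(x_i)$ a single vertex and $G(t_1t_2)=G(t_1)\cup G(t_2)$ plus an edge from the leftmost variable of $t_1$ to that of $t_2$; root $x_1$. $T_x$ is the rooted induced subtree of $x$ and its descendants, $h$ is height. With $T=G(t)$, $T'=G(t')$: $Z_{t,t'}$ is the smallest $m\ge0$ such that some $x$ has $T_x=T'_x$, $h(T_x)=m$, and different parents in $T$ and $T'$. A strongly connected component (SCC) is trivial if it is a single vertex without a loop, nontrivial otherwise. For $m\ge1$, an $m$-whirl is a digraph whose vertex set is partitioned into nonempty blocks $B_0,\dots,B_{m-1}$ (indices mod $m$) with edge set exactly $\bigcup_iB_i\times B_{i+1}$. $Z_G$ is the largest $m\ge0$ such that some SCC that is a whirl has a block containing vertices $u,w$ with a walk $u\to v_0\to\dots\to v_m$ and $(w,v_0)\notin E$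 ($\infty$ if unbounded, $-\infty$ if no such $m$). *)

From mathcomp Require Import all_boot.
Set Implicit Arguments. Unset Strict Implicit. Unset Printing Implicit Defensive.

(* Variables x_1, ..., x_n are encoded as Var 0, ..., Var (n-1). *)
Inductive term := Var of nat | App of term & term.

Fixpoint vars (t : term) : seq nat :=
  match t with Var i => [:: i] | App t1 t2 => vars t1 ++ vars t2 end.

Definition inB (n : nat) (t : term) : Prop := vars t = iota 0 n.

Fixpoint lm (t : term) : nat :=
  match t with Var i => i | App t1 _ => lm t1 end.

(* edge list of the rooted tree G(t) (edges directed away from the root) *)
Fixpoint tedges (t : term) : seq (nat * nat) :=
  match t with
  | Var _ => [::]
  | App t1 t2 => (lm t1, lm t2) :: (tedges t1 ++ tedges t2)
  end.

Definition tedge (t : term) (x y : nat) : Prop := (x, y) \in tedges t.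

Inductive desc (t : term) (x : nat) : nat -> Prop :=
| desc_refl : desc t x x
| desc_step y z : desc t x y -> tedge t y z -> desc t x z.

Fixpoint tpath (t : term) (x k : nat) : Prop :=
  match k with
  | 0 => True
  | k'.+1 => exists y, tedge t x y /\ tpath t y k'
  end.

Definition height (t : term) (x m : nat) : Prop :=
  tpath t x m /\ ~ tpath t x m.+1.

Definition subtree_eq (t t' : term) (x : nat) : Prop :=
  (forall y, desc t x y <-> desc t' x y) /\
  (forall y z, desc t x y -> desc t x z -> (tedge t y z <-> tedge t' y z)).

Definition diff_parents (t t' : term) (x : nat) : Prop :=
  exists p p', tedge t p x /\ tedge t' p' x /\ p <> p'.

Definition Zprop (t t' : term) (m : nat) : Prop :=
  exists x, subtree_eq t t' x /\ height t x m /\ diff_parents t t' x.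

Definition IsZtt (t t' : term) (m : nat) : Prop :=
  Zprop t t' m /\ forall k, k < m -> ~ Zprop t t' k.

(* A digraph is a type V (possibly infinite) with an edge relation E. *)
(* A(G) has carrier option V, None standing for infinity. *)
Definition Aop (V : Type) (E : rel V) (x y : option V) : option V :=
  match x, y with
  | Some a, Some b => if E a b then Some a else None
  | _, _ => None
  end.

Fixpoint evalt (V : Type) (E : rel V) (a : nat -> option V) (t : term) : option V :=
  match t with
  | Var i => a i
  | App t1 t2 => Aop E (evalt E a t1) (evalt E a t2)
  end.

Definition satisfies (V : Type) (E : rel V) (t t' : term) : Prop :=
  forall a : nat -> option V, evalt E a t = evalt E a t'.

Inductive reach (V : Type) (E : rel V) (u : V) : V -> Prop :=
| reach_refl : reach E u u
| reach_step v w : reach E u v -> E v w -> reach E u w.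

Definition isSCC (V : Type) (E : rel V) (K : V -> Prop) : Prop :=
  exists v, forall u, K u <-> (reach E v u /\ reach E u v).

Definition nontrivialSCC (V : Type) (E : rel V) (K : V -> Prop) : Prop :=
  ~ (exists v, (forall u, K u <-> u = v) /\ ~~ E v v).

(* the induced subgraph on K is an m-whirl with block function blk
   (block B_i = {u in K | blk u = i}) *)
Definition whirl (V : Type) (E : rel V) (K : V -> Prop) (m : nat) (blk : V -> nat) : Prop :=
  0 < m /\
  (forall u, K u -> blk u < m) /\
  (forall i, i < m -> exists u, K u /\ blk u = i) /\
  (forall u v, K u -> K v -> (E u v <-> blk v = (blk u).+1 %% m)).

Definition walk (V : Type) (E : rel V) (u : V) (v : nat -> V) (m : nat) : Prop :=
  E u (v 0) /\ forall i, i < m -> E (v i) (v i.+1).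

Definition ZGprop (V : Type) (E : rel V) (m : nat) : Prop :=
  exists (K : V -> Prop) (k : nat) (blk : V -> nat) (u w : V) (v : nat -> V),
    isSCC E K /\ whirl E K k blk /\ K u /\ K w /\ blk u = blk w /\
    walk E u v m /\ ~~ E w (v 0).

Inductive extnat := NegInf | Fin of nat | PosInf.

Definition ext_lt (a b : extnat) : Prop :=
  match a, b with
  | NegInf, NegInf => False
  | NegInf, _ => True
  | Fin x, Fin y => x < y
  | Fin _, PosInf => True
  | _, _ => False
  end.

Definition IsZG (V : Type) (E : rel V) (z : extnat) : Prop :=
  match z with
  | NegInf => forall m, ~ ZGprop E m
  | Fin n => ZGprop E n /\ forall m, ZGprop E m -> m <= n
  | PosInf => forall k, exists m, k <= m /\ ZGprop E m
  end.

From mathcomp Require Import all_boot zify.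
From Stdlib Require ClassicalEpsilon.
Set Implicit Arguments. Unset Strict Implicit.

(* Evaluating [t] in A(G) at an assignment of vertices yields a vertex exactly
   when the assignment is a homomorphism from the tree G(t) to G; hence an
   identity t ~ t' of A(G) says that every homomorphism G(t) -> G is also a
   homomorphism G(t') -> G.  Let x be the vertex witnessing Z = Z_{t,t'}, with
   parents p in G(t) and p' in G(t').  Colouring G(t) by depth modulo the
   period of a whirl shows that p and p' have congruent depths.  Now map the
   subtree T_x (of height Z) along the walk v_0 -> ... -> v_Z, send p to u and
   the rest of G(t) into the whirl by depth, with p' sent to w, which lies in
   the block of u.  This is a homomorphism from G(t), hence from G(t'), whose
   edge p' -> x gives the edge w -> v_0. *)

Definition tree_hom (V : Type) (E : rel V) (f : nat -> V) (t : term) : bool :=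
  all (fun e => E (f e.1) (f e.2)) (tedges t).

Lemma tree_homP (V : Type) (E : rel V) (f : nat -> V) (t : term) :
  reflect (forall y z, tedge t y z -> E (f y) (f z)) (tree_hom E f t).
Proof. by apply: (iffP allP) => [h y z /h | h [y z] /h]. Qed.

Lemma evalt_Some (V : Type) (E : rel V) (f : nat -> V) (t : term) :
  evalt E (fun i => Some (f i)) t =
  if tree_hom E f t then Some (f (lm t)) else None.
Proof.
rewrite /tree_hom; elim: t => [i|t1 IH1 t2 IH2] //=.
rewrite IH1 IH2 all_cat.
by case: (all _ (tedges t1)); case: (all _ (tedges t2)); rewrite /= ?andbF //; case: (E _ _).
Qed.

Lemma satisfies_tree_hom (V : Type) (E : rel V) (t t' : term) (f : nat -> V) :
  satisfies E t t' -> tree_hom E f t -> tree_hom E f t'.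
Proof.
move=> sat hom; have := sat (fun i => Some (f i)).
by rewrite !evalt_Some hom; case: tree_hom.
Qed.

Lemma inB_uniq (n : nat) (t : term) : inB n t -> uniq (vars t).
Proof. by move->; apply: iota_uniq. Qed.

Lemma lm_vars (t : term) : lm t \in vars t.
Proof. by elim: t => [i|t1 IH1 t2 IH2] /=; rewrite ?inE ?mem_cat ?IH1. Qed.

Lemma uniq_vars_App (t1 t2 : term) : uniq (vars (App t1 t2)) ->
  [/\ uniq (vars t1), uniq (vars t2) & forall y, y \in vars t1 -> y \notin vars t2].
Proof.
rewrite /= cat_uniq => /and3P [u1 /hasPn dis u2]; split=> // y y1.
by apply: contraL y1 => /dis.
Qed.

Lemma tedges_vars (t : term) (y z : nat) : uniq (vars t) -> (y, z) \in tedges t ->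
  [/\ y \in vars t, z \in vars t & z != lm t].
Proof.
elim: t y z => [//|t1 IH1 t2 IH2] y z /uniq_vars_App [u1 u2 dis] /=.
rewrite inE !mem_cat; case/or3P => [/eqP [-> ->]|/(IH1 _ _ u1) [-> -> //]|].
  rewrite !lm_vars orbT; split=> //; apply/eqP => e.
  by move: (dis _ (lm_vars t1)); rewrite -e lm_vars.
move/(IH2 _ _ u2) => [-> z2 _]; rewrite z2 !orbT; split=> //; apply/eqP => e.
by move: (dis _ (lm_vars t1)); rewrite -e z2.
Qed.

Lemma tedges_parent_unique (t : term) (y y' z : nat) : uniq (vars t) ->
  (y, z) \in tedges t -> (y', z) \in tedges t -> y = y'.
Proof.
elim: t y y' z => [//|t1 IH1 t2 IH2] y y' z U; have [u1 u2 dis] := uniq_vars_App U.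
have dis2 a : a \in vars t2 -> a \notin vars t1 by apply: contraL => /dis.
suff edgeE a : (a, z) \in tedges (App t1 t2) -> if z \in vars t1 then is_true ((a, z) \in tedges t1)
    else if z == lm t2 then a = lm t1 else (a, z) \in tedges t2.
  move=> /edgeE e /edgeE e'; case: ifP e e' => _; first exact: IH1.
  by case: ifP => _ e e'; [rewrite e e' | apply: IH2 e e'].
rewrite /= inE mem_cat => /or3P [/eqP [-> ->]|e|e].
- by rewrite (negPf (dis2 _ (lm_vars t2))) eqxx.
- by have [_ -> _] := tedges_vars u1 e.
- have [_ z2 nz] := tedges_vars u2 e.
  by rewrite (negPf (dis2 _ z2)) (negPf nz).
Qed.

(* G(App t1 t2) hangs G(t2) below the root of G(t1). *)
Fixpoint depth (t : term) (y : nat) : nat :=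
  match t with
  | Var _ => 0
  | App t1 t2 => if y \in vars t2 then (depth t2 y).+1 else depth t1 y
  end.

Lemma depth_lm (t : term) : uniq (vars t) -> depth t (lm t) = 0.
Proof.
elim: t => [//|t1 IH1 t2 IH2] /uniq_vars_App [u1 _ dis] /=.
by rewrite (negPf (dis _ (lm_vars t1))) IH1.
Qed.

Lemma depth_tedges (t : term) (y z : nat) : uniq (vars t) ->
  (y, z) \in tedges t -> depth t z = (depth t y).+1.
Proof.
elim: t y z => [//|t1 IH1 t2 IH2] y z U; have [u1 u2 dis] := uniq_vars_App U.
rewrite /= inE mem_cat => /or3P [/eqP [-> ->]|e|e].
- by rewrite lm_vars (negPf (dis _ (lm_vars t1))) !depth_lm.
- have [y1 z1 _] := tedges_vars u1 e.
  by rewrite (negPf (dis _ y1)) (negPf (dis _ z1)) (IH1 _ _ u1 e).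
- by have [-> -> _] := tedges_vars u2 e; rewrite (IH2 _ _ u2 e).
Qed.

Lemma tpath_le (t : term) (x k j : nat) : tpath t x k -> j <= k -> tpath t x j.
Proof.
elim: k x j => [|k IH] x [|j] //= [y [e p]] le_jk.
by exists y; split=> //; apply: IH p le_jk.
Qed.

Section Glue.
Variables (V : Type) (P : nat -> Prop) (h g : nat -> V).

Definition glue (y : nat) : V :=
  if ClassicalEpsilon.excluded_middle_informative (P y) then h y else g y.

Lemma glue_in (y : nat) : P y -> glue y = h y.
Proof. by rewrite /glue; case: ClassicalEpsilon.excluded_middle_informative. Qed.

Lemma glue_out (y : nat) : ~ P y -> glue y = g y.
Proof. by rewrite /glue; case: ClassicalEpsilon.excluded_middle_informative. Qed.

End Glue.

Section Tree.
Variable t : term.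
Hypothesis ut : uniq (vars t).

Lemma desc_depth (x y : nat) : desc t x y -> depth t x <= depth t y.
Proof. by elim=> [//|y' z _ le_xy e]; rewrite (depth_tedges ut e) leqW. Qed.

Lemma tedge_not_desc (y z : nat) : tedge t y z -> ~ desc t z y.
Proof. by move=> e /desc_depth; rewrite (depth_tedges ut e) ltnn. Qed.

Lemma tpath_desc (x y k : nat) : desc t x y -> tpath t y k ->
  tpath t x (k + (depth t y - depth t x)).
Proof.
move=> D; elim: D k => [|y' z D IH e] k pz; first by rewrite subnn addn0.
have := IH k.+1 (ex_intro _ z (conj e pz)).
by rewrite (depth_tedges ut e) (subSn (desc_depth D)) addSnnS.
Qed.

Lemma height_desc_depth (x h y : nat) : height t x h -> desc t x y ->
  depth t y - depth t x <= h.
Proof.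
move=> [_ no_path] D; rewrite leqNgt; apply/negP => lt_h.
by apply: no_path; apply: tpath_le (tpath_desc D (k := 0) I) _.
Qed.

(* Edges leaving T_x stay in T_x, and the only edge entering it is p -> x. *)
Lemma tree_hom_glue (V : Type) (E : rel V) (x p : nat) (h g : nat -> V) :
  tedge t p x ->
  (forall y z, tedge t y z -> ~ desc t x z -> E (g y) (g z)) ->
  E (g p) (h x) ->
  (forall y z, desc t x y -> tedge t y z -> E (h y) (h z)) ->
  tree_hom E (glue (desc t x) h g) t.
Proof.
move=> ep out_hom root_edge in_hom; apply/tree_homP => y z e.
case: (ClassicalEpsilon.excluded_middle_informative (desc t x z)) => Dz.
  case: Dz e => [|y0 z' D0 e0] e.
    rewrite (tedges_parent_unique ut e ep) (glue_out _ _ (tedge_not_desc ep)).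
    by rewrite glue_in //; apply: desc_refl.
  rewrite (tedges_parent_unique ut e e0) !glue_in //; last exact: desc_step D0 e0.
  exact: in_hom.
have Dy : ~ desc t x y by move=> Dy; apply: Dz; apply: desc_step Dy e.
by rewrite !glue_out //; apply: out_hom.
Qed.

End Tree.

Lemma walk_prefix (V : Type) (E : rel V) (u : V) (v : nat -> V) (m k : nat) :
  walk E u v m -> k <= m -> walk E u v k.
Proof. by move=> [e0 ev] le_km; split=> // i lt_ik; apply: ev; apply: leq_trans le_km. Qed.

Section Whirl.
Variables (V : Type) (E : rel V) (K : V -> Prop) (m : nat) (blk : V -> nat).
Hypothesis wh : whirl E K m blk.

Lemma whirl_block_choice : exists sel : nat -> V, forall i, K (sel i) /\ blk (sel i) = i %% m.
Proof.
have [m_gt0 [_ [blk_inhabited _]]] := wh.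
pose sel i := ClassicalEpsilon.constructive_indefinite_description _
  (blk_inhabited (i %% m) (ltn_pmod i m_gt0)).
exists (fun i => proj1_sig (sel i)) => i; exact: proj2_sig (sel i).
Qed.

Lemma whirl_edge_mod (a b : V) (i j : nat) : K a -> K b ->
  blk a = i %% m -> blk b = j %% m -> E a b <-> j = i.+1 %[mod m].
Proof.
have [_ [_ [_ whE]]] := wh; move=> Ka Kb ba bb.
by rewrite whE // ba bb -[(i %% m).+1]addn1 modnDml addn1.
Qed.

Lemma depth_layer_tree_hom (t : term) (g : nat -> V) (s : nat) : uniq (vars t) ->
  (forall y, K (g y) /\ blk (g y) = (depth t y + s) %% m) -> tree_hom E g t.
Proof.
move=> ut layer; apply/tree_homP => y z e.
have [Ky by_] := layer y; have [Kz bz] := layer z.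
by apply/(whirl_edge_mod Ky Kz by_ bz); rewrite (depth_tedges ut e) addSn.
Qed.

Lemma whirl_parent_depth (t t' : term) (x p p' : nat) :
  satisfies E t t' -> uniq (vars t) -> tedge t p x -> tedge t' p' x ->
  depth t p = depth t p' %[mod m].
Proof.
move=> sat ut ep ep'; have [sel selP] := whirl_block_choice.
pose g y := sel (depth t y).
have layer y : K (g y) /\ blk (g y) = (depth t y + 0) %% m by rewrite addn0; apply: selP.
move/tree_homP: (satisfies_tree_hom sat (depth_layer_tree_hom ut layer)) => /(_ _ _ ep').
have [[Kp' bp'] [Kx bx]] := (layer p', layer x).
move/(whirl_edge_mod Kp' Kx bp' bx); rewrite !addn0 (depth_tedges ut ep) => e.
by apply/eqP; rewrite -(eqn_modDr 1) !addn1 e.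
Qed.

Lemma whirl_walk_edge (t t' : term) (x p p' Z : nat) (u w : V) (v : nat -> V) :
  satisfies E t t' -> uniq (vars t) -> uniq (vars t') ->
  subtree_eq t t' x -> height t x Z -> tedge t p x -> tedge t' p' x -> p <> p' ->
  K u -> K w -> blk u = blk w -> walk E u v Z -> E w (v 0).
Proof.
move=> sat ut ut' [same_desc _] hx ep ep' pp' Ku Kw buw [uv0 walkv].
have [m_gt0 [blk_lt _]] := wh; have [sel selP] := whirl_block_choice.
(* The offset [s] puts [p] in the block of [u], and [p'] with it. *)
pose s := blk u + depth t p * m.-1.
have sp : (depth t p + s) %% m = blk u.
  have -> : depth t p + s = depth t p * m + blk u by rewrite /s; case: m m_gt0 => //; lia.
  by rewrite modnMDl modn_small ?blk_lt.
have np'p : (p' == p) = false by apply/eqP => /esym.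
pose g y := if y == p then u else if y == p' then w else sel (depth t y + s).
have layer y : K (g y) /\ blk (g y) = (depth t y + s) %% m.
  rewrite /g; case: eqVneq => [->|_]; first by rewrite sp.
  case: eqVneq => [->|_]; last exact: selP.
  by rewrite -buw -sp -modnDml (whirl_parent_depth sat ut ep ep') modnDml.
pose h y := v (depth t y - depth t x).
have hom : tree_hom E (glue (desc t x) h g) t.
  apply: (tree_hom_glue ut ep) => [y z e _||y z Dy e].
  - by move/tree_homP: (depth_layer_tree_hom ut layer); apply.
  - by rewrite /g /h eqxx subnn.
  have := height_desc_depth ut hx (desc_step Dy e).
  rewrite /h (depth_tedges ut e) (subSn (desc_depth ut Dy)) => lt_Z.
  exact: walkv.
have p'_out : ~ desc t x p'.
  by move=> /same_desc D; apply: (tedge_not_desc ut' ep' D).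
move/tree_homP: (satisfies_tree_hom sat hom) => /(_ _ _ ep').
by rewrite (glue_out _ _ p'_out) glue_in /g /h ?np'p ?eqxx ?subnn //; apply: desc_refl.
Qed.

End Whirl.

Lemma IsZG_ext_lt (V : Type) (E : rel V) (Z : nat) (z : extnat) :
  (forall m, ZGprop E m -> m < Z) -> IsZG E z -> ext_lt z (Fin Z).
Proof.
move=> bound; case: z => //= [k [ZGk _]|unbounded]; first exact: bound.
have [m [le_Zm ZGm]] := unbounded Z.
by have := bound m ZGm; rewrite ltnNge le_Zm.
Qed.

Theorem lemma6p16 (n : nat) (t t' : term) (V : Type) (E : rel V) :
  inB n t -> inB n t' -> t <> t' -> satisfies E t t' ->
  forall Z : nat, IsZtt t t' Z ->
  (forall (K : V -> Prop) (m : nat) (blk : V -> nat) (u w : V) (v : nat -> V),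
      isSCC E K -> nontrivialSCC E K -> whirl E K m blk ->
      K u -> K w -> blk u = blk w -> walk E u v Z -> E w (v 0))
  /\ (forall z : extnat, IsZG E z -> ext_lt z (Fin Z)).
Proof.
move=> Bt Bt' _ sat Z [[x [Tx [hx [p [p' [ep [ep' pp']]]]]]] _].
have walk_edge K m blk u w v : whirl E K m blk ->
    K u -> K w -> blk u = blk w -> walk E u v Z -> E w (v 0).
  move=> wh; exact: (whirl_walk_edge wh sat (inB_uniq Bt) (inB_uniq Bt') Tx hx ep ep' pp').
split=> [K m blk u w v _ _|]; first exact: walk_edge.
move=> z; apply: IsZG_ext_lt => k [K [m [blk [u [w [v [_ [wh [Ku [Kw [buw [wk nE]]]]]]]]]]]].
rewrite ltnNge; apply: contraNN nE => le_Zk.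
exact: walk_edge wh Ku Kw buw (walk_prefix wk le_Zk).
Qed.
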